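(* ${\rm Eigen}(\sigma_{\varphi,\mathfrak{w}},V^\Gamma)=\bigcup\{{\rm Eigen}(\sigma_{\varphi\restriction_{\frac\alpha\sim},\mathfrak{w}^{\frac\alpha\sim}},V^{\frac\alpha\sim}):\alpha\in\Gamma\}$.
   Context: $V$ is a vector space over a field $F$, $\Gamma$ a nonempty set, $\varphi:\Gamma\to\Gamma$ a self-map, and $\mathfrak{w}=(\mathfrak{w}_\alpha)_{\alpha\in\Gamma}\in F^\Gamma$. The weighted generalized shift is $\sigma_{\varphi,\mathfrak{w}}:V^\Gamma\to V^\Gamma$, $(x_\alpha)_{\alpha\in\Gamma}\mapsto(\mathfrak{w}_\alpha x_{\varphi(\alpha)})_{\alpha\in\Gamma}$. For nonempty $D\subseteq\Gamma$, $\mathfrak{w}^D:=(\mathfrak{w}_\alpha)_{\alpha\in D}$. The relation $\sim$ on $\Gamma$ is defined by $\alpha\sim\beta$ iff there exist $n,m\geq1$ with $\varphi^n(\alpha)=\varphi^m(\beta)$; it is an equivalence relation and $\frac{\alpha}{\sim}$ denotes the equivalence class of $\alpha$ (which is mapped into itself by $\varphi$). For a linear map $T:W\to W$, ${\rm Eigen}(T,W)$ is the set of all $r\in F$ such that $T(x)=rx$ for some nonzero $x\in W$. *)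

From HB Require Import structures.
From mathcomp Require Import all_boot all_order all_algebra.
Set Implicit Arguments. Unset Strict Implicit. Unset Printing Implicit Defensive.
Import GRing.Theory.
Local Open Scope ring_scope.

Section WGS.
Variables (F : fieldType) (V : lmodType F).

Definition wshift (G : Type) (phi : G -> G) (w : G -> F) (x : G -> V) : G -> V :=
  fun a => w a *: x (phi a).

Definition Eigen (G : Type) (T : (G -> V) -> (G -> V)) (r : F) : Prop :=
  exists x : G -> V, x <> (fun _ => 0) /\ T x = (fun a => r *: x a).
End WGS.

Definition sim (G : Type) (phi : G -> G) (a b : G) : Prop :=
  exists n m : nat, (0 < n)%N /\ (0 < m)%N /\ iter n phi a = iter m phi b.

Definition cls (G : Type) (phi : G -> G) (a : G) : Type := {b : G | sim phi a b}.

Lemma sim_phi (G : Type) (phi : G -> G) (a b : G) :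
  sim phi a b -> sim phi a (phi b).
Proof.
case=> n [m [Hn [Hm E]]]; exists n.+1, m; split => //; split => //.
by rewrite iterS E -iterS iterSr.
Qed.

Definition phi_res (G : Type) (phi : G -> G) (a : G) (b : cls phi a) : cls phi a :=
  exist _ (phi (proj1_sig b)) (sim_phi (proj2_sig b)).

Definition w_res (F : Type) (G : Type) (phi : G -> G) (w : G -> F) (a : G)
  (b : cls phi a) : F := w (proj1_sig b).

(* An eigenvector x of the shift restricts to an eigenvector on the class of any point where
   it does not vanish, since phi maps each class into itself. Conversely, a class is also
   closed under phi-preimages, so extending an eigenvector on a class by zero outside it
   gives an eigenvector of the whole shift for the same eigenvalue. *)
From HB Require Import structures.
From mathcomp Require Import all_boot all_order all_algebra.
From Stdlib Require Import Classical ClassicalEpsilon FunctionalExtensionality ProofIrrelevance.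
Set Implicit Arguments. Unset Strict Implicit. Unset Printing Implicit Defensive.
Import GRing.Theory.
Local Open Scope ring_scope.

Lemma exists_nonzero_value (T : Type) (U : zmodType) (x : T -> U) :
  x <> (fun _ => 0) -> exists t, x t <> 0.
Proof.
move=> x_neq0; apply: NNPP => x_vanishes; apply: x_neq0.
apply: functional_extensionality => t; apply: NNPP => xt_neq0.
by apply: x_vanishes; exists t.
Qed.

Section Similarity.
Variables (G : Type) (phi : G -> G).

Lemma sim_refl (a : G) : sim phi a a.
Proof. by exists 1%N, 1%N. Qed.

Lemma sim_phiV (a b : G) : sim phi a (phi b) -> sim phi a b.
Proof.
case=> n [m [n_gt0 [_ Enm]]]; exists n, m.+1; split => //; split => //.
by rewrite iterSr.
Qed.

End Similarity.

Section ExtendByZero.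
Variables (G : Type) (P : G -> Prop).

Definition extend0 (U : zmodType) (y : {b | P b} -> U) (b : G) : U :=
  match excluded_middle_informative (P b) with
  | left Pb => y (exist _ b Pb)
  | right _ => 0
  end.

Lemma extend0_val (U : zmodType) (y : {b | P b} -> U) (b : {b | P b}) :
  extend0 y (sval b) = y b.
Proof.
case: b => b Pb; rewrite /extend0 /=.
by case: excluded_middle_informative => [Pb'|//]; rewrite (proof_irrelevance _ Pb' Pb).
Qed.

Lemma extend0_out (U : zmodType) (y : {b | P b} -> U) (b : G) :
  ~ P b -> extend0 y b = 0.
Proof. by rewrite /extend0; case: excluded_middle_informative. Qed.

Lemma extend0_neq0 (U : zmodType) (y : {b | P b} -> U) :
  y <> (fun _ => 0) -> extend0 y <> (fun _ => 0).
Proof.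
move=> /exists_nonzero_value [b yb_neq0] ext_eq0; apply: yb_neq0.
by rewrite -extend0_val ext_eq0.
Qed.

Lemma extend0_scale (R : pzRingType) (W : lmodType R) (r : R) (y : {b | P b} -> W) :
  extend0 (fun b => r *: y b) = (fun b => r *: extend0 y b).
Proof.
apply: functional_extensionality => b; rewrite /extend0.
by case: excluded_middle_informative; rewrite ?scaler0.
Qed.

End ExtendByZero.

Section ShiftOnClass.
Variables (F : fieldType) (V : lmodType F) (G : Type) (phi : G -> G) (w : G -> F) (a : G).

Local Notation shift := (wshift (V := V) phi w).
Local Notation shift_res := (wshift (V := V) (@phi_res G phi a) (@w_res F G phi w a)).

Lemma wshift_extend0 (y : cls phi a -> V) :
  shift (extend0 y) = extend0 (shift_res y).
Proof.
apply: functional_extensionality => b.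
have [sim_ab | not_sim_ab] := classic (sim phi a b).
  rewrite (extend0_val _ (exist _ b sim_ab)).
  by rewrite /wshift (extend0_val _ (exist _ (phi b) (sim_phi sim_ab))).
have not_sim_aphib : ~ sim phi a (phi b) by move=> sim_aphib; exact/not_sim_ab/sim_phiV.
by rewrite /wshift !extend0_out ?scaler0.
Qed.

Lemma Eigen_restrict (r : F) (x : G -> V) :
  x a <> 0 -> shift x = (fun b => r *: x b) -> Eigen shift_res r.
Proof.
move=> xa_neq0 Ex; exists (fun b => x (sval b)); split.
  by move=> /(congr1 (fun f => f (exist _ a (sim_refl phi a)))).
by apply: functional_extensionality => b; rewrite -(equal_f Ex (sval b)).
Qed.

Lemma Eigen_extend0 (r : F) : Eigen shift_res r -> Eigen shift r.
Proof.
case=> y [y_neq0 Ey]; exists (extend0 y); split; first exact: extend0_neq0.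
by rewrite wshift_extend0 Ey extend0_scale.
Qed.

End ShiftOnClass.

Theorem lemma2p4 (F : fieldType) (V : lmodType F) (G : Type) (HG : inhabited G)
  (phi : G -> G) (w : G -> F) :
  forall r : F,
    Eigen (wshift (V := V) phi w) r <->
    exists a : G, Eigen (wshift (V := V) (@phi_res G phi a) (@w_res F G phi w a)) r.
Proof.
move=> r; split.
- case=> x [/exists_nonzero_value [a xa_neq0] Ex].
  by exists a; exact: Eigen_restrict xa_neq0 Ex.
- by case=> a; exact: Eigen_extend0.
Qed.
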